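(* Let $I=\langle N,M,V\rangle$ be an ordered instance of goods. If there is a good $g\in M$ such that at most one agent in $N$ does not have an MMS partition in which the bundle containing $g$ has cardinality two, then there exist an agent $i\in N$ and a good $g'\in M\setminus\{g\}$ such that allocating $\{g,g'\}$ to $i$ is a valid reduction.
   Context: An instance $I=\langle N,M,V\rangle$ has agents $N=\{1,\dots,n\}$, goods $M=\{1,\dots,m\}$ and additive valuations $v_i$ with $v_i(\emptyset)=0$, $v_i(S)=\sum_{g\in S}v_i(\{g\})$, $v_{ij}:=v_i(\{j\})\ge 0$. It is ordered if $v_{ij}\ge v_{i(j+1)}$ for all $i$ and $1\le j<m$. An allocation ($n$-partition) is an ordered $n$-tuple of pairwise disjoint, possibly empty subsets of $M$ with union $M$. The maximin share of $i$ in $I$ is $\mu_i^I=\max_A\min_j v_i(A_j)$ over all allocations; an MMS partition of $i$ is an allocation $A$ with $v_i(A_j)\ge\mu_i^I$ for all $j$. Removing agents $N'\subseteq N$ and items $M'\subseteq M$ is a valid reduction if the items of $M'$ can be allocated to the agents of $N'$ so that each $i'\in N'$ receives a bundle $B_{i'}$ with $v_{i'}(B_{i'})\ge\mu_{i'}^I$, and every $i\in N\setminus N'$ satisfies $\mu_i^{I'}\ge\mu_i^I$, where $I'=\langle N\setminus N', M\setminus M', V\rangle$ (valuations restricted, maximin share computed with $|N\setminus N'|$ bundles). ''Allocating $B$ to $i$ is a valid reduction'' means this holds with $N'=\{i\}$, $M'=B$. *)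

From mathcomp Require Import all_boot all_order all_algebra.
Set Implicit Arguments. Unset Strict Implicit. Unset Printing Implicit Defensive.
Import Order.TTheory GRing.Theory Num.Theory.
Local Open Scope ring_scope.

(* An instance with n agents ('I_n) and m goods ('I_m); additive valuations
   are given by the item values v i j = v_{ij} (for a subset S of goods,
   v_i(S) = \sum_(j in S) v i j). *)

Section Defs.
Variable R : realFieldType.

Definition val {m} (vi : 'I_m -> R) (S : {set 'I_m}) : R := \sum_(j in S) vi j.

(* bundle j of the allocation of the goods of S encoded by f
   (f assigns each good its bundle index) *)
Definition bundle {m k} (S : {set 'I_m}) (f : {ffun 'I_m -> 'I_k}) (j : 'I_k)
  : {set 'I_m} := [set g in S | f g == j].

Definition minbundle {m k} (vi : 'I_m -> R) (S : {set 'I_m})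
  (f : {ffun 'I_m -> 'I_k.+1}) : R :=
  \big[Num.min/val vi (bundle S f ord0)]_(j < k.+1) val vi (bundle S f j).

(* maximin share of an agent with valuation vi, on goods S, with k bundles:
   max over all k-partitions of S of the min bundle value.
   (k = 0 never matters; it is set to 0.) *)
Definition mms {m} (vi : 'I_m -> R) (S : {set 'I_m}) (k : nat) : R :=
  match k with
  | 0 => 0
  | k'.+1 => \big[Num.max/minbundle vi S ([ffun=> ord0] : {ffun 'I_m -> 'I_k'.+1})]_(f : {ffun 'I_m -> 'I_k'.+1})
               minbundle vi S f
  end.

Definition ordered_instance {n m} (v : 'I_n -> 'I_m -> R) : Prop :=
  (forall i j, 0 <= v i j) /\
  (forall i (j1 j2 : 'I_m), (j1 <= j2)%N -> v i j2 <= v i j1).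

Definition mms_partition {n m} (v : 'I_n -> 'I_m -> R) (i : 'I_n)
  (f : {ffun 'I_m -> 'I_n}) : Prop :=
  forall j, mms (v i) setT n <= val (v i) (bundle setT f j).

Definition valid_reduction {n m} (v : 'I_n -> 'I_m -> R)
  (N' : {set 'I_n}) (M' : {set 'I_m}) : Prop :=
  (exists h : {ffun 'I_m -> 'I_n},
      (forall g, g \in M' -> h g \in N') /\
      (forall i, i \in N' -> mms (v i) setT n <= val (v i) (bundle M' h i))) /\
  (forall i, i \notin N' -> mms (v i) setT n <= mms (v i) (~: M') (n - #|N'|)).

End Defs.

From Pilot Require Import Defs.
From mathcomp Require Import all_boot all_order all_algebra.
Set Implicit Arguments. Unset Strict Implicit. Unset Printing Implicit Defensive.
Import Order.TTheory GRing.Theory Num.Theory.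
Local Open Scope ring_scope.

(* Among all agents having an MMS partition in which g is bundled with exactly
   one other good, pick the pair (i, h) with h of largest index, i.e. least
   valuable.  Giving {g, h} to some agent k leaves every other agent j an
   (n-1)-partition of the remaining goods with all bundles worth at least its
   maximin share mu_j, as soon as j has an MMS
   partition whose bundle containing g is worth at least v_j({g, h}): merge that
   bundle with the one containing h and delete g and h.  Paired agents have such
   a partition by the choice of h; so does any agent with mu_j >= v_j({g, h}).
   Hence give {g, h} to the unique unpaired agent if it values {g, h} at least
   mu_k, and to i otherwise. *)

(* [val] alone would denote the subtype projection of eqtype. *)
Local Notation val := Defs.val.

Section Valuation.
Variables (R : realFieldType) (m : nat) (vi : 'I_m -> R).
Implicit Types (A B : {set 'I_m}) (g h : 'I_m).

Lemma val_subset A B : (forall j, 0 <= vi j) -> A \subset B -> val vi A <= val vi B.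
Proof.
move=> vi_ge0 sAB; rewrite /Defs.val (big_setID A (A:=B)) /= (setIidPr sAB) lerDl.
exact: sumr_ge0.
Qed.

Lemma val_setU A B : [disjoint A & B] -> val vi (A :|: B) = val vi A + val vi B.
Proof.
by move=> dAB; rewrite /Defs.val -bigU //; apply: eq_bigl => x; rewrite inE.
Qed.

Lemma val_setD A B : B \subset A -> val vi (A :\: B) = val vi A - val vi B.
Proof.
by move=> sBA; rewrite [val vi A](big_setID B) /= (setIidPr sBA) addrC addrK.
Qed.

Lemma val_set2 g h : g != h -> val vi [set g; h] = vi g + vi h.
Proof.
by move=> ngh; rewrite /Defs.val big_setU1 ?inE // big_set1.
Qed.

End Valuation.

Lemma in_bundle m k (S : {set 'I_m}) (f : {ffun 'I_m -> 'I_k}) j x :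
  (x \in bundle S f j) = (x \in S) && (f x == j).
Proof. by rewrite inE. Qed.

Section MaximinShare.
Variables (R : realFieldType) (m : nat) (vi : 'I_m -> R) (S : {set 'I_m}) (k : nat).

Lemma mms_ge_partition (f : {ffun 'I_m -> 'I_k.+1}) c :
  (forall j, c <= val vi (bundle S f j)) -> c <= mms vi S k.+1.
Proof. by move=> hc; apply: (bigmax_sup f) => //; apply: le_bigmin. Qed.

Lemma exists_mms_partition : exists f : {ffun 'I_m -> 'I_k.+1},
  forall j, mms vi S k.+1 <= val vi (bundle S f j).
Proof.
have [f ->] : exists f : {ffun 'I_m -> 'I_k.+1}, mms vi S k.+1 = minbundle vi S f.
  apply: (big_ind (fun y => exists f, y = minbundle vi S f)) => [|x y [f1 ->] [f2 ->]|f _].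
  - by exists [ffun=> ord0].
  - by case: leP; [exists f2 | exists f1].
  - by exists f.
by exists f => j; apply: bigmin_le.
Qed.

End MaximinShare.

Section Merge.
Variable k : nat.

(* Collapses b onto [lift b c]: composing a (k+2)-partition with [unliftd c b]
   merges its bundles b and [lift b c] into bundle c. *)
Definition unliftd (c : 'I_k.+1) (b x : 'I_k.+2) : 'I_k.+1 := odflt c (unlift b x).

Lemma unliftd_id c b : unliftd c b b = c.
Proof. by rewrite /unliftd unlift_none. Qed.

Lemma unliftd_eq c b x j :
  (unliftd c b x == j) = (x == lift b j) || (x == b) && (j == c).
Proof.
rewrite /unliftd; case: unliftP => [i ->|->] /=.
  rewrite (inj_eq (@lift_inj _ b)) (eq_sym (lift b i)).
  by rewrite (negbTE (neq_lift _ _)) orbF.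
by rewrite (negbTE (neq_lift _ _)) eqxx eq_sym.
Qed.

Variables (R : realFieldType) (m : nat) (vi : 'I_m -> R).
Hypothesis vi_ge0 : forall j, 0 <= vi j.

Lemma mms_setC_pair (f : {ffun 'I_m -> 'I_k.+2}) mu g h :
  (forall j, mu <= val vi (bundle setT f j)) ->
  val vi [set g; h] <= val vi (bundle setT f (f g)) ->
  mu <= mms vi (~: [set g; h]) k.+1.
Proof.
move=> f_ge gh_le.
(* c is the bundle of h after merging, so that g and h both end up in c. *)
set b := f g; set c := unliftd ord0 b (f h).
pose f' : {ffun 'I_m -> 'I_k.+1} := [ffun x => unliftd c b (f x)].
have f'E x j : (f' x == j) = (f x == lift b j) || (f x == b) && (j == c).
  by rewrite ffunE unliftd_eq.
have f'_gh x : x \in [set g; h] -> f' x = c.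
  rewrite ffunE => /set2P[] ->; first by rewrite unliftd_id.
  by rewrite /c /unliftd; case: unlift.
apply: (mms_ge_partition (f := f')) => j.
case: (eqVneq j c) => [->|njc].
- have Bc : bundle setT f' c = bundle setT f (lift b c) :|: bundle setT f b.
    by apply/setP => x; rewrite !inE f'E eqxx andbT.
  have disj : [disjoint bundle setT f (lift b c) & bundle setT f b].
    apply/pred0P => x /=; rewrite !inE; case: eqP => //= ->.
    by rewrite eq_sym (negbTE (neq_lift _ _)).
  have gh_sub : [set g; h] \subset bundle setT f' c.
    by apply/subsetP => x /f'_gh f'x; rewrite in_bundle in_setT f'x eqxx.
  have -> : bundle (~: [set g; h]) f' c = bundle setT f' c :\: [set g; h].
    by apply/setP => x; rewrite !inE andbC.
  rewrite val_setD // Bc val_setU // -addrA.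
  by apply: le_trans (f_ge (lift b c)) _; rewrite lerDl subr_ge0.
- apply: le_trans (f_ge (lift b j)) (val_subset vi_ge0 _).
  apply/subsetP => x; rewrite in_bundle in_setT => /eqP fx.
  have f'x : f' x = j by apply/eqP; rewrite f'E fx eqxx.
  rewrite in_bundle in_setC f'x eqxx andbT; apply: contra njc => /f'_gh.
  by rewrite f'x => ->.
Qed.

End Merge.

Lemma valid_reduction_pair (R : realFieldType) n m (v : 'I_n -> 'I_m -> R) i g h :
  mms (v i) setT n <= val (v i) [set g; h] ->
  (forall j, j != i -> mms (v j) setT n <= mms (v j) (~: [set g; h]) n.-1) ->
  valid_reduction v [set i] [set g; h].
Proof.
move=> mms_i mms_j; split.
- exists [ffun=> i]; split=> [x _|j /set1P ->]; first by rewrite ffunE set11.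
  suff -> : bundle [set g; h] [ffun=> i] i = [set g; h] by [].
  by apply/setP => x; rewrite in_bundle ffunE eqxx andbT.
- by move=> j; rewrite in_set1 cards1 subn1; apply: mms_j.
Qed.

Section OrderedInstance.
Variables (R : realFieldType) (n m : nat) (v : 'I_n.+2 -> 'I_m -> R) (g : 'I_m).
Hypothesis v_ge0 : forall i j, 0 <= v i j.
Hypothesis v_nonincr : forall i (j1 j2 : 'I_m), (j1 <= j2)%N -> v i j2 <= v i j1.

Definition mergeable i h := exists f : {ffun 'I_m -> 'I_n.+2},
  mms_partition v i f /\ val (v i) [set g; h] <= val (v i) (bundle setT f (f g)).

Lemma mms_setC_mergeable i h :
  mergeable i h -> mms (v i) setT n.+2 <= mms (v i) (~: [set g; h]) n.+1.
Proof. by case=> f [f_mms gh_le]; apply: mms_setC_pair gh_le. Qed.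

Lemma mergeable_of_le_mms i h :
  val (v i) [set g; h] <= mms (v i) setT n.+2 -> mergeable i h.
Proof.
move=> gh_le; have [f f_mms] := exists_mms_partition (v i) setT n.+1.
by exists f; split=> //; apply: le_trans gh_le (f_mms _).
Qed.

Definition pairs_with i h : bool := (h != g) &&
  [exists f : {ffun 'I_m -> 'I_n.+2},
     [forall j, mms (v i) setT n.+2 <= val (v i) (bundle setT f j)] &&
     (bundle setT f (f g) == [set g; h])].

Definition paired i := [exists h, pairs_with i h].

Lemma paired_of_card_bundle2 i :
  (exists f, mms_partition v i f /\ #|bundle setT f (f g)| = 2) -> paired i.
Proof.
case=> f [f_mms /eqP/cards2P[x [y [nxy Bg]]]].
have [h [Bg' h_g]] : exists h, bundle setT f (f g) = [set g; h] /\ h != g.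
  have : g \in bundle setT f (f g) by rewrite in_bundle in_setT eqxx.
  rewrite Bg => /set2P[gx|gy]; [exists y; subst x | exists x; subst y].
    by rewrite eq_sym.
  by rewrite setUC.
apply/existsP; exists h; rewrite /pairs_with h_g; apply/existsP; exists f.
by rewrite Bg' eqxx andbT; apply/forallP.
Qed.

Lemma mms_le_pair i h : pairs_with i h -> mms (v i) setT n.+2 <= val (v i) [set g; h].
Proof. by case/andP=> _ /existsP[f /andP[/forallP f_mms /eqP Bg]]; rewrite -Bg. Qed.

Lemma mergeable_of_pairs_with i h (h' : 'I_m) :
  pairs_with i h -> (h <= h')%N -> h' != g -> mergeable i h'.
Proof.
case/andP=> h_g /existsP[f /andP[/forallP f_mms /eqP Bg]] le_hh' h'_g.
exists f; split=> //; rewrite Bg !val_set2 1?eq_sym //.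
by rewrite lerD2l v_nonincr.
Qed.

Hypothesis unpaired_eq : forall i1 i2 : 'I_n.+2,
  ~ (exists f, mms_partition v i1 f /\ #|bundle setT f (f g)| = 2) ->
  ~ (exists f, mms_partition v i2 f /\ #|bundle setT f (f g)| = 2) ->
  i1 = i2.

Lemma unpaired_unique i1 i2 : ~~ paired i1 -> ~~ paired i2 -> i1 = i2.
Proof.
by move=> /negP no1 /negP no2; apply: unpaired_eq => /paired_of_card_bundle2.
Qed.

Lemma exists_pairs_with : exists p : 'I_n.+2 * 'I_m, pairs_with p.1 p.2.
Proof.
case: (boolP (paired ord0)) => [/existsP[h ?]|no0]; first by exists (ord0, h).
case: (boolP (paired ord_max)) => [/existsP[h ?]|no1]; first by exists (ord_max, h).
by have /(congr1 (@nat_of_ord _)) := unpaired_unique no0 no1.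
Qed.

Lemma exists_valid_pair_reduction :
  exists i g', g' != g /\ valid_reduction v [set i] [set g; g'].
Proof.
have [p0 pair0] := exists_pairs_with.
case: (@arg_maxnP _ p0 (fun p => pairs_with p.1 p.2) (fun p => p.2) pair0).
move=> -[i hs] /= pair_i hs_max.
have hs_g : hs != g by case/andP: pair_i.
have paired_mergeable j : paired j -> mergeable j hs.
  by case/existsP=> h pair_j; apply: mergeable_of_pairs_with pair_j (hs_max (j, h) pair_j) hs_g.
pose exceptional k := ~~ paired k && (mms (v k) setT n.+2 <= val (v k) [set g; hs]).
case: (pickP exceptional) => [k /andP[no_k mms_k] | none].
- exists k, hs; split=> //; apply: valid_reduction_pair mms_k _ => j nj_k.
  apply/mms_setC_mergeable/paired_mergeable.
  by apply: contraR nj_k => no_j; rewrite (unpaired_unique no_j no_k).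
- exists i, hs; split=> //; apply: valid_reduction_pair (mms_le_pair pair_i) _ => j _.
  apply: mms_setC_mergeable; case: (boolP (paired j)) => [/paired_mergeable //|no_j].
  apply/mergeable_of_le_mms/ltW.
  by move: (none j); rewrite /exceptional no_j /= => /negbT; rewrite -ltNge.
Qed.

End OrderedInstance.

Theorem lemma22 (R : realFieldType) (n m : nat) (v : 'I_n -> 'I_m -> R)
  (Hn : (2 <= n)%N) (Hord : ordered_instance v) (g : 'I_m) :
  (forall i1 i2 : 'I_n,
      ~ (exists f, mms_partition v i1 f /\ #|bundle setT f (f g)| = 2%N) ->
      ~ (exists f, mms_partition v i2 f /\ #|bundle setT f (f g)| = 2%N) ->
      i1 = i2) ->
  exists (i : 'I_n) (g' : 'I_m), g' != g /\ valid_reduction v [set i] [set g; g'].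
Proof.
move: v Hord; case: n Hn => [|[|n]] // _ v [v_ge0 v_nonincr] unpaired_eq.
exact: exists_valid_pair_reduction.
Qed.
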